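(* In the setting of the context, assume $G_{xy}^{[1]}=1$, $G_x/G_x^{[1]}$ is insoluble and $G_x^{[1]}\neq1$. Then $G_x^{[1]}$ is isomorphic to $A_4$ or $S_4$, and $G_e$ acts faithfully by conjugation on $G_x^{[1]}G_y^{[1]}$.
   Context: $\mathcal{A}=(G_x,G_e,G_{xy})$ is a finite, primitive amalgam of degree $(5,2)$ (no nontrivial subgroup of $G_{xy}$ normal in both $G_x$ and $G_e$; $|G_x:G_{xy}|=5$, $|G_e:G_{xy}|=2$), $G=G_x*_{G_{xy}}G_e$ acts on the coset graph (5-valent tree) $\Gamma$, $x$ is the vertex with stabiliser $G_x$, $y$ the neighbour with $G_e$ the setwise stabiliser of $\{x,y\}$ and $G_x\cap G_y=G_{xy}$. $G_z^{[1]}$ is the pointwise stabiliser of $z$ and its neighbours, $G_{xy}^{[1]}=G_x^{[1]}\cap G_y^{[1]}$. *)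

From HB Require Import structures.
From mathcomp Require Import all_boot all_fingroup all_solvable.
Set Implicit Arguments. Unset Strict Implicit. Unset Printing Implicit Defensive.
Local Open Scope group_scope.

(* The amalgam (Gx, Ge, Gxy) is realised by subgroups of a finite group gT
   with Gx :&: Ge = Gxy. *)

Definition primitive_amalgam (gT : finGroupType) (Gx Ge Gxy : {set gT}) :=
  forall H : {group gT}, H \subset Gxy -> H <| Gx -> H <| Ge -> H :=: 1.

(* G_z^{[1]}: kernel of the action of the vertex stabiliser Gz on the
   neighbours of z, i.e. on the cosets of the arc stabiliser Gxy in Gz. *)
Definition kernel1 (gT : finGroupType) (Gz Gxy : {set gT}) := gcore Gxy Gz.

(* Gx acts on the five neighbours of x, i.e. the cosets of Gxy, through a
   morphism r into Sym(T), |T| = 5, with kernel A; Gxy maps onto the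
   stabiliser of a point j, and D := T \ {j} has four points.
   - The image of Gx is transitive and insoluble, so it contains Alt(T); hence
     r(Gxy) contains CA, the stabiliser of j in Alt(T), which is A4 acting
     2-transitively on D, and lies in CS, the stabiliser in Sym(T), an S4.
   - B is normal in Gxy and meets A trivially, so r(B) is isomorphic to B and
     is a nontrivial normal subgroup of the primitive group r(Gxy): it is
     transitive on D and 4 | |B| | 24.
   - 3 | |B|: otherwise |A| = |B| is 4 or 8, elements of order 5 centralise A,
     and simplicity of Alt(5) produces a 3-element of Gxy centralising A whose
     t-conjugate would act trivially on D.  So r(B) is CS or CA, the only
     subgroup of order 12 of CS.
   - Elements of Gxy centralising B commute with CA, hence lie in A; this gives
     the faithfulness of Ge on A B. *)
From HB Require Import structures.
From mathcomp Require Import all_boot all_fingroup all_solvable.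
Set Implicit Arguments. Unset Strict Implicit. Unset Printing Implicit Defensive.
Local Open Scope group_scope.

Section PermutationGroups.
Variable T : finType.
Implicit Types (p : {perm T}) (S : {set T}) (H : {group {perm T}}).

Lemma perm_stab_id (x0 : T) p :
  p \in 'C[x0 | 'P] -> p \in 'C(setT :\ x0 | 'P) -> p = 1.
Proof.
move=> /astab1P /= px0 /astabP pD; apply/permP => u; rewrite perm1.
have [-> //|ux0] := eqVneq u x0.
by apply: pD; rewrite !inE ux0.
Qed.

Lemma stab1_normD1 (x0 : T) p : p \in 'C[x0 | 'P] -> p \in 'N(setT :\ x0 | 'P).
Proof.
move/astab1P => /= px0; apply/astabsP => u; rewrite /= /aperm !inE /=.
by rewrite -{1}px0 (inj_eq perm_inj).
Qed.

Lemma cent_trans_fix H S p u :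
  [transitive H, on S | 'P] -> p \in 'C(H) -> u \in S -> p u = u ->
  p \in 'C(S | 'P).
Proof.
move=> trH cHp Su pu; apply/astabP => _ /(atransP2 trH Su)[h Hh ->].
by rewrite /= /aperm -permM -(centP cHp h Hh) permM pu.
Qed.

(* A permutation commuting with a 2-transitive group on at least three points
   and stabilising that set fixes it pointwise: were p u = v <> u, an element
   fixing u and moving v would have to fix p u = v. *)
Lemma cent_2trans_fix H S p :
  2 < #|S| -> [transitive^2 H, on S | 'P] -> p \in 'C(H) -> p \in 'N(S | 'P) ->
  p \in 'C(S | 'P).
Proof.
move=> S_gt2 tr2H cHp nSp; apply/astabP => u Su /=; rewrite /aperm.
apply/eqP/negP => /negP vu; set v := p u in vu.
have Sv : v \in S by rewrite (astabs_act u nSp).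
have [w] : exists w, w \in S :\ u :\ v.
  apply/set0Pn; rewrite -card_gt0.
  by move: S_gt2; rewrite (cardsD1 u) (cardsD1 v) Su !inE Sv vu /= !add1n.
rewrite !inE => /and3P[wv wu Sw].
have dt s : s \in S -> s != u -> [tuple u; s] \in 2.-dtuple(S).
  by move=> Ss us; rewrite inE /= !memtE !subset_all /= Su Ss !inE eq_sym us.
have [h Hh /(congr1 val) /= [hu hw]] := atransP2 tr2H (dt v Sv vu) (dt w Sw wu).
by move: wv; rewrite hw /aperm -permM (centP cHp h Hh) permM -/(aperm u h) -hu eqxx.
Qed.

End PermutationGroups.

Section Actions.
Variables (aT : finGroupType) (sT : finType) (to : {action aT &-> sT}).
Implicit Types (G H L : {group aT}) (S : {set sT}).

Lemma primitive_supgroup G H S :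
  G \subset H -> [acts H, on S | to] -> [primitive G, on S | to] ->
  [primitive H, on S | to].
Proof.
move=> sGH nSH /andP[trG noQ]; apply/andP; split.
  by rewrite (atrans_supgroup sGH trG).
apply: contra noQ => /existsP[Q /and3P[pQ nQH cQ]]; apply/existsP; exists Q.
by rewrite /imprimitivity_system pQ cQ (subset_trans sGH nQH).
Qed.

(* A transitive action of prime degree is primitive: the point stabiliser
   has prime index, hence is maximal. *)
Lemma prime_trans_primitive G S :
  prime #|S| -> [transitive G, on S | to] -> [primitive G, on S | to].
Proof.
move=> prS trG; have [x Sx _] := imsetP trG.
rewrite (trans_prim_astab Sx trG) /maximal_eq p_index_maximal ?orbT ?subsetIl //.
by rewrite -card_orbit (atransP trG x Sx).
Qed.

Lemma prim_normal_trans G L S :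
  [primitive G, on S | to] -> [faithful G, on S | to] -> L <| G -> L :!=: 1 ->
  [transitive L, on S | to].
Proof.
move=> primG ffulG nLG ntL; have [cLS|//] := prim_trans_norm primG nLG.
by case/negP: ntL; rewrite -subG1 (subset_trans cLS ffulG).
Qed.

End Actions.

(* Two subgroups of index 2 coincide when one of them has no subgroup of
   index 2: K :&: H has index at most |G : H| = 2 in K. *)
Lemma index2_subgroup_unique (gT : finGroupType) (G H K : {group gT}) :
  H \subset G -> K \subset G -> #|G : H| = 2 -> #|G : K| = 2 ->
  (forall L : {group gT}, L \subset K -> #|K : L| != 2) -> H :=: K.
Proof.
move=> sHG sKG iH iK noL.
have nHK : K \subset 'N(H) := subset_trans sKG (normal_norm (index2_normal sHG iH)).
have iKH : #|K : K :&: H| %| 2.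
  rewrite indexgI -indexMg -(norm_joinEr nHK) -iH indexSg ?joing_subl //.
  by rewrite join_subG sHG.
have sKH : K \subset H.
  rewrite -indexg_eq1 -indexgI; move: iKH (noL _ (subsetIl K H)).
  by case: #|_ : _| (indexg_gt0 K (K :&: H)) => [|[|[|k]]] // _ /dvdn_leq.
apply/eqP; rewrite eq_sym eqEcard sKH /=.
by rewrite -(divg_indexS sHG) -(divg_indexS sKG) iH iK.
Qed.

(* The possible orders of a transitive subgroup of Alt(5). *)
Lemma mult5_dvd60 k : 5 %| k -> k %| 60 -> k \in [:: 5; 10; 15; 20; 30; 60].
Proof.
move=> d5 d60; have := dvdn_leq (isT : 0 < 60) d60; move: k d5 d60.
by do 61!case=> //.
Qed.

(* In a group of order 5, 10, 15 or 20 the Sylow 5-subgroup is unique. *)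
Lemma Syl5_count k m : k \in [:: 5; 10; 15; 20] -> m %| k -> m %% 5 = 1%N -> m = 1%N.
Proof.
rewrite !inE => /or4P[] /eqP-> dm; have := dvdn_leq (ltn0Sn _) dm;
  by move: m dm; do 21!case=> //.
Qed.

(* Groups of order 5, 10, 15 or 20 are solvable: their Sylow 5-subgroup is
   normal, with a quotient of prime-power order. *)
Lemma solvable_order_5k (gT : finGroupType) (K : {group gT}) :
  #|K| \in [:: 5; 10; 15; 20] -> solvable K.
Proof.
move=> oK; have /eqP/normal_sylowP[S sylS nSK] : #|'Syl_5(K)| = 1%N.
  exact: Syl5_count oK (card_Syl_dvd 5 K) (card_Syl_mod K _).
rewrite (series_sol nSK) (pgroup_sol (pHall_pgroup sylS)) /=.
have oS : #|S| = 5.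
  by case/pHallP: sylS => _ ->; rewrite p_part; move: oK; rewrite !inE => /or4P[]/eqP->.
have oKS : #|K / S| = #|K| %/ 5.
  by rewrite card_quotient ?normal_norm // -divgS ?normal_sub // oS.
apply: (@pgroup_sol _ (if #|K| == 15 then 3 else 2)); rewrite /pgroup oKS.
by move: oK; rewrite !inE => /or4P[]/eqP->.
Qed.

(* The even part of an insoluble permutation group is insoluble, since the
   quotient by it embeds in the abelian group of signs. *)
Lemma insoluble_even_part (T : finType) (P : {group {perm T}}) :
  ~~ solvable P -> ~~ solvable (P :&: 'Alt_T).
Proof.
apply: contra => solK; rewrite (series_sol (normalGI (subsetT P) (Alt_normal T))) solK.
have /isog_sol -> := first_isog_loc (sign_morph T) (subsetT P).
apply: abelian_sol; apply: abelianS (subsetT _) _.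
by apply/centsP => a _ b _; apply: addbC.
Qed.

Lemma card_Alt5 (T : finType) : #|T| = 5 -> #|'Alt_T| = 60.
Proof. by move=> oT; apply/eqP; rewrite -(eqn_pmul2l (isT : 0 < 2)) card_Alt oT. Qed.

(* An insoluble transitive permutation group of degree 5 contains Alt(5):
   its even part K is insoluble and, by primitivity, transitive, so
   5 | |K| | 60; orders below 30 are solvable and order 30 would give a
   normal subgroup of the simple group Alt(5). *)
Lemma insoluble_transitive_Alt5 (T : finType) (P : {group {perm T}}) :
  #|T| = 5 -> [transitive P, on setT | 'P] -> ~~ solvable P -> 'Alt_T \subset P.
Proof.
move=> oT trP nsolP; set K := (P :&: 'Alt_T)%G.
have nsolK : ~~ solvable K := insoluble_even_part nsolP.
have ntK : K :!=: 1 by apply: contra nsolK => /eqP->; apply: solvable1.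
have primP : [primitive P, on setT | 'P].
  by apply: prime_trans_primitive; rewrite // cardsT oT.
have trK := prim_normal_trans primP (aperm_faithful P) (normalGI (subsetT P) (Alt_normal T)) ntK.
have oAlt := card_Alt5 oT.
have sKA : K \subset 'Alt_T := subsetIr P _.
have := atrans_dvd trK; rewrite cardsT oT => /mult5_dvd60.
rewrite -oAlt => /(_ (cardSg sKA)); rewrite oAlt => oK.
have [/solvable_order_5k solK | not_small] := boolP (#|K| \in [:: 5; 10; 15; 20]).
  by rewrite solK in nsolK.
have : (#|K| == 30) || (#|K| == 60).
  by move: oK not_small; rewrite !inE; do 4!case: (_ == _).
case/orP=> /eqP {}oK.
  have nKAlt : K <| 'Alt_T by rewrite index2_normal // -divgS // oAlt oK.
  have /simpleP[_ /(_ K nKAlt)] : simple 'Alt_T by rewrite simple_Alt5 ?oT.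
  by case=> KE; move: oK; rewrite KE ?cards1 ?oAlt.
have <- : K :=: 'Alt_T by apply/eqP; rewrite eqEcard sKA oK oAlt.
exact: subsetIl.
Qed.

(* The stabiliser of a point x0 in Sym(T), where #|T| = n + 2, is isomorphic
   to Sym(n + 1): list the other points of T as 'I_n.+1 and let a permutation
   of the indices move them accordingly while fixing x0. *)
Section PointStabiliser.
Variables (T : finType) (x0 : T) (n : nat).
Hypothesis cardT : #|T| = n.+2.

Definition other_points := enum [set~ x0].
Definition other_point (i : 'I_n.+1) : T := nth x0 other_points i.
Definition other_index (x : T) : 'I_n.+1 := inord (index x other_points).

Lemma size_other_points : size other_points = n.+1.
Proof. by rewrite -cardE cardsC1 cardT. Qed.

Lemma other_point_neq i : other_point i != x0.
Proof.
have : other_point i \in other_points by rewrite mem_nth // size_other_points.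
by rewrite mem_enum !inE.
Qed.

Lemma other_pointK : cancel other_point other_index.
Proof.
move=> i; apply: val_inj.
by rewrite /other_index /other_point index_uniq ?enum_uniq ?size_other_points /= ?inordK.
Qed.

Lemma other_indexK x : x != x0 -> other_point (other_index x) = x.
Proof.
move=> xx0; have x_other : x \in other_points by rewrite mem_enum !inE.
by rewrite /other_point /other_index inordK ?nth_index // -size_other_points index_mem.
Qed.

Definition stab_ext_fun (q : {perm 'I_n.+1}) (x : T) : T :=
  if x == x0 then x0 else other_point (q (other_index x)).

Lemma stab_ext_inj q : injective (stab_ext_fun q).
Proof.
move=> x y; rewrite /stab_ext_fun.
have [-> | xx0] := eqVneq x x0; have [-> | yx0] := eqVneq y x0 => //.
- by move=> e; case/eqP: (other_point_neq (q (other_index y))).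
- by move=> e; case/eqP: (other_point_neq (q (other_index x))).
move=> /(congr1 other_index); rewrite !other_pointK => /perm_inj/(congr1 other_point).
by rewrite !other_indexK.
Qed.

Definition stab_ext q : {perm T} := perm (@stab_ext_inj q).

Lemma stab_extE q x : stab_ext q x = stab_ext_fun q x.
Proof. by rewrite permE. Qed.

Lemma stab_ext_morphM : {in 'Sym_('I_n.+1) &, {morph stab_ext : a b / a * b}}.
Proof.
move=> a b _ _; apply/permP => x; rewrite permM !stab_extE /stab_ext_fun.
have [_|xx0] := eqVneq x x0; first by rewrite eqxx.
by rewrite (negPf (other_point_neq _)) other_pointK permM.
Qed.

Canonical stab_ext_morphism := Morphism stab_ext_morphM.

Lemma injm_stab_ext : 'injm stab_ext_morphism.
Proof.
apply/injmP => a b _ _ /= eab; apply/permP => i.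
have := congr1 (fun p : {perm T} => p (other_point i)) eab.
rewrite /= !stab_extE /stab_ext_fun (negPf (other_point_neq i)) other_pointK.
by move/(congr1 other_index); rewrite !other_pointK.
Qed.

Lemma card_stab_Sym : #|'C_('Sym_T)[x0 | 'P]| = n.+1`!.
Proof.
have trS : [transitive 'Sym_T, on setT | 'P].
  by apply: (ntransitive1 _ (Sym_trans T)); rewrite cardT.
have := card_orbit_stab 'P 'Sym_T x0.
rewrite (atransP trS x0 (in_setT x0)) cardsT card_Sym cardT factS => /eqP.
by rewrite eqn_pmul2l // => /eqP.
Qed.

Lemma stab_Sym_isog : 'C_('Sym_T)[x0 | 'P] \isog 'Sym_('I_n.+1).
Proof.
rewrite isog_sym; apply/isogP; exists stab_ext_morphism; first exact: injm_stab_ext.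
apply/eqP; rewrite eqEcard card_injm ?injm_stab_ext //.
rewrite card_stab_Sym card_Sym card_ord leqnn andbT subsetI subsetT /=.
apply/subsetP => _ /morphimP[q _ _ ->]; apply/astab1P.
by rewrite /= /aperm stab_extE /stab_ext_fun eqxx.
Qed.

End PointStabiliser.

Section FivePoints.
Variables (T : finType) (j : T).
Hypothesis cardT : #|T| = 5.

Let D := [set: T] :\ j.
Let CS := ('C_('Sym_T)[j | 'P])%G.
Let CA := ('C_('Alt_T)[j | 'P])%G.

Lemma card_D1 : #|D| = 4.
Proof. by have := cardsD1 j [set: T]; rewrite cardsT cardT inE => -[]. Qed.

Lemma card_stab_Sym5 : #|CS| = 24.
Proof. exact: card_stab_Sym (cardT : #|T| = 3.+2). Qed.

Lemma Alt5_3trans : [transitive^3 'Alt_T, on [set: T] | 'P].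
Proof. by have := Alt_trans T; rewrite cardT. Qed.

Lemma card_stab_Alt5 : #|CA| = 12.
Proof.
have := card_orbit_stab 'P 'Alt_T j.
rewrite (atransP (ntransitive1 (isT : 0 < 3) Alt5_3trans) j (in_setT j)).
rewrite cardsT cardT card_Alt5 // (_ : 60 = 5 * 12)%N // => /eqP.
by rewrite eqn_pmul2l // => /eqP.
Qed.

Lemma stab_Alt5_2trans : [transitive^2 CA, on D | 'P].
Proof. exact: stab_ntransitive (in_setT j) Alt5_3trans. Qed.

Lemma stab_Alt5_primitive : [primitive CA, on D | 'P].
Proof. exact: ntransitive_primitive stab_Alt5_2trans. Qed.

Lemma stab_faithful (G : {group {perm T}}) : G \subset 'C[j | 'P] -> [faithful G, on D | 'P].
Proof.
move=> sGj; apply/subsetP => p /setIP[Gp cDp]; rewrite inE; apply/eqP.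
exact: perm_stab_id (subsetP sGj p Gp) cDp.
Qed.

(* CA = A4 has no subgroup of index 2: such a subgroup would be normal, hence
   transitive on the four points, but it has order 6. *)
Lemma stab_Alt5_no_index2 (L : {group {perm T}}) : L \subset CA -> #|CA : L| != 2.
Proof.
move=> sLCA; apply/negP => /eqP iL.
have oL : #|L| = 6 by rewrite -(divg_indexS sLCA) iL card_stab_Alt5.
have ntL : L :!=: 1 by rewrite trivg_card1 oL.
have := prim_normal_trans stab_Alt5_primitive (stab_faithful (subsetIr _ _))
  (index2_normal sLCA iL) ntL.
by move/atrans_dvd; rewrite card_D1 oL.
Qed.

Lemma stab_Sym5_order12 (L : {group {perm T}}) : L \subset CS -> #|L| = 12 -> L :=: CA.
Proof.
move=> sLCS oL; have sCA : CA \subset CS by apply: setSI; apply: subsetT.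
apply: (index2_subgroup_unique sLCS sCA _ _ stab_Alt5_no_index2).
  by rewrite -divgS // card_stab_Sym5 oL.
by rewrite -divgS // card_stab_Sym5 card_stab_Alt5.
Qed.

Lemma stab_Sym5_isog : CS \isog 'Sym_('I_4).
Proof. exact: stab_Sym_isog (cardT : #|T| = 3.+2). Qed.

Lemma stab_Alt5_isog : CA \isog 'Alt_('I_4).
Proof.
have /isogP[f injf fS] := isog_symr stab_Sym5_isog.
have sAS : 'Alt_('I_4) \subset 'Sym_('I_4) := Alt_subset _.
have oAlt4 : #|'Alt_('I_4)| = 12.
  by apply/eqP; rewrite -(eqn_pmul2l (isT : 0 < 2)) card_Alt card_ord.
rewrite isog_sym; apply/isogP; exists (restrm_morphism sAS f).
  by rewrite injm_restrm.
rewrite morphim_restrm setIid; apply: stab_Sym5_order12.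
  by rewrite -fS morphimS.
by rewrite card_injm ?oAlt4 // (subset_trans sAS) // ?injf.
Qed.

End FivePoints.

Section CosetAction.
Variables (gT : finGroupType) (G H : {group gT}).
Hypothesis sHG : H \subset G.

Definition coset_point := {X : {set gT} | X \in rcosets H G}.
Definition coset_action := subaction coset_point 'Rs.
Definition coset_perm := actperm coset_action.

Lemma coset_perm_dom : G \subset 'dom coset_perm.
Proof.
have := actsRs_rcosets H G; rewrite /subact_dom.
by congr (_ \subset 'N(_ | _)); apply/setP => X; rewrite inE.
Qed.

Lemma coset_permE g X : g \in G -> val (coset_perm g X) = val X :* g.
Proof.
move=> Gg; rewrite /coset_perm actpermE /coset_action /= val_subact.
by rewrite ifT ?(subsetP coset_perm_dom) //; apply: rcosetE.
Qed.

Lemma card_coset_point : #|{: coset_point}| = #|G : H|.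
Proof. by rewrite card_sig; apply: eq_card => X; rewrite !inE. Qed.

Lemma base_coset_subproof : (H : {set gT}) \in rcosets H G.
Proof. by apply/rcosetsP; exists 1; rewrite ?group1 ?rcoset1. Qed.

Definition base_coset : coset_point := Sub (H : {set gT}) base_coset_subproof.

Lemma coset_perm_stab g : g \in G -> (coset_perm g \in 'C[base_coset | 'P]) = (g \in H).
Proof.
move=> Gg; apply/astab1P/idP => [/(congr1 val) | Hg].
  by rewrite /= /aperm coset_permE //= => <-; rewrite rcoset_refl.
by apply: val_inj; rewrite /= /aperm coset_permE //= rcoset_id.
Qed.

Lemma ker_coset_perm : 'ker_G coset_perm = gcore H G.
Proof.
apply/setP => g; apply/idP/idP.
  case/setIP => Gg /mker g1; rewrite -astabRs_rcosets; apply/astabP => X HGX.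
  have := congr1 (fun p : {perm coset_point} => val (p (Sub X HGX))) g1.
  rewrite /= coset_permE // perm1 /= => XgX.
  by rewrite -[RHS]XgX; apply: rcosetE.
move=> cHg; have Gg : g \in G := subsetP (subset_trans (gcore_sub H G) sHG) g cHg.
rewrite inE Gg /=; apply/kerP; first exact: (subsetP coset_perm_dom).
apply/permP => X; apply: val_inj; rewrite coset_permE // perm1.
move: cHg; rewrite -astabRs_rcosets => /astabP /(_ _ (valP X)) XgX.
by rewrite -[in RHS]XgX; apply/esym/rcosetE.
Qed.

Lemma coset_perm_trans : [transitive coset_perm @* G, on setT | 'P].
Proof.
apply/imsetP; exists base_coset => //; apply/setP => X; rewrite inE; apply/esym.
case/rcosetsP: (valP X) => g Gg X_def; apply/imsetP; exists (coset_perm g).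
  by apply: mem_morphim => //; apply: (subsetP coset_perm_dom).
by apply: val_inj; rewrite /= /aperm coset_permE.
Qed.

End CosetAction.

(* The possible orders of a transitive subgroup of S4. *)
Lemma mult4_dvd24 a : 4 %| a -> a %| 24 -> a \in [:: 4; 8; 12; 24].
Proof.
move=> d4 d24; have := dvdn_leq (isT : 0 < 24) d24; move: a d4 d24.
by do 25!case=> //.
Qed.

Lemma dvd_2group_mod5 a c : a \in [:: 4; 8] -> c %| a -> c = a %[mod 5] -> c = a.
Proof.
rewrite !inE => /orP[]/eqP-> dc; have := dvdn_leq (ltn0Sn _) dc;
  by move: c dc; do 9!case=> //.
Qed.

Lemma dvd_2group_3nat a m : a \in [:: 4; 8] -> m %| a -> 3.-nat m -> m = 1%N.
Proof.
rewrite !inE => /orP[]/eqP-> dm; have := dvdn_leq (ltn0Sn _) dm;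
  by move: m dm; do 9!case=> //.
Qed.

Section Amalgam.
Variables (gT : finGroupType) (Gx Ge Gxy : {group gT}) (t : gT).
Hypotheses (sGxy_x : Gxy \subset Gx) (sGxy_e : Gxy \subset Ge).
Hypotheses (iGe : #|Ge : Gxy| = 2) (tGe : t \in Ge :\: Gxy).

Let A := gcore_group Gxy Gx.
Let B := gcore_group Gxy (Gx :^ t)%G.

Lemma Gxy_normal_Ge : Gxy <| Ge.
Proof. exact: index2_normal. Qed.

Lemma t_norm_Gxy : t \in 'N(Gxy).
Proof. by case/setDP: tGe => Get _; apply: subsetP (normal_norm Gxy_normal_Ge) t Get. Qed.

Lemma Ge_minus_Gxy : Ge :\: Gxy = Gxy :* t.
Proof. by rewrite (rcoset_index2 sGxy_e iGe tGe). Qed.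

Lemma tt_in_Gxy : t * t \in Gxy.
Proof.
case/setDP: tGe => Get; apply: contraR => Gxy_tt.
by rewrite -(mulgK t t) -mem_rcoset -Ge_minus_Gxy inE Gxy_tt groupM.
Qed.

Lemma A_sub_Gxy : A \subset Gxy. Proof. exact: gcore_sub. Qed.
Lemma B_sub_Gxy : B \subset Gxy. Proof. exact: gcore_sub. Qed.
Lemma B_sub_Gx : B \subset Gx. Proof. exact: subset_trans B_sub_Gxy sGxy_x. Qed.
Lemma Gx_norm_A : Gx \subset 'N(A). Proof. exact: gcore_norm. Qed.

Lemma Gxy_conj_t : Gxy :^ t = Gxy.
Proof. exact/normP/t_norm_Gxy. Qed.

Lemma B_conjA : B :=: A :^ t.
Proof.
apply/eqP; rewrite eqEsubset; apply/andP; split.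
  rewrite -sub_conjgV; apply: gcore_max.
    by rewrite sub_conjgV Gxy_conj_t gcore_sub.
  by rewrite normJ -sub_conjg gcore_norm.
apply: gcore_max; first by rewrite -Gxy_conj_t conjSg A_sub_Gxy.
by rewrite normJ conjSg Gx_norm_A.
Qed.

Lemma card_B : #|B| = #|A|.
Proof. by rewrite B_conjA cardJg. Qed.

Lemma A_conjB : B :^ t = A.
Proof.
rewrite B_conjA -conjsgM; apply/normP.
exact: subsetP Gx_norm_A _ (subsetP sGxy_x _ tt_in_Gxy).
Qed.

Lemma Gxy_norm_A : Gxy \subset 'N(A). Proof. exact: subset_trans sGxy_x Gx_norm_A. Qed.

Lemma Gxy_norm_B : Gxy \subset 'N(B).
Proof. by rewrite B_conjA normJ -Gxy_conj_t conjSg Gxy_norm_A. Qed.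

Lemma Ge_swap k : k \in Ge -> k \notin Gxy -> A :^ k = B /\ B :^ k = A.
Proof.
move=> Gek nGxyk; have : k \in Gxy :* t by rewrite -Ge_minus_Gxy inE nGxyk Gek.
case/rcosetP => h Gxyh ->; rewrite !conjsgM.
rewrite (normP (subsetP Gxy_norm_A h Gxyh)) (normP (subsetP Gxy_norm_B h Gxyh)).
by rewrite -B_conjA A_conjB.
Qed.

Lemma Ge_acts_AB : [acts Ge, on A * B | 'J].
Proof.
rewrite /= astabsJ; apply/subsetP => k Gek; rewrite inE conjsMg.
have [Gxyk | nGxyk] := boolP (k \in Gxy).
  by rewrite (normP (subsetP Gxy_norm_A k Gxyk)) (normP (subsetP Gxy_norm_B k Gxyk)).
have [-> ->] := Ge_swap Gek nGxyk.
by rewrite (normC (subset_trans A_sub_Gxy Gxy_norm_B)).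
Qed.

Section Representation.
Hypothesis iGx : #|Gx : Gxy| = 5.
Hypotheses (AB1 : A :&: B = 1) (nsolQ : ~~ solvable (Gx / A)) (ntA : A :!=: 1).

(* Gx acts on the five neighbours of x, i.e. on the cosets of Gxy. *)
Let T : finType := coset_point Gx Gxy.
Let r := coset_perm Gx Gxy.
Let j := base_coset Gx Gxy.
Let D := [set: T] :\ j.
Let CS := ('C_('Sym_T)[j | 'P])%G.
Let CA := ('C_('Alt_T)[j | 'P])%G.

Lemma card_T : #|T| = 5.
Proof. by rewrite card_coset_point. Qed.

Lemma r_dom : Gx \subset 'dom r. Proof. exact: coset_perm_dom. Qed.

Lemma rM g h : g \in Gx -> h \in Gx -> r (g * h) = r g * r h.
Proof. by move=> Gg Gh; rewrite /r /coset_perm morphM // (subsetP r_dom). Qed.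

Lemma r_eq1 g : g \in Gx -> (r g == 1) = (g \in A).
Proof.
move=> Gg; rewrite /A /= -(ker_coset_perm sGxy_x) inE Gg /=.
by apply/eqP/idP => [g1 | /mker //]; apply/kerP => //; apply: (subsetP r_dom).
Qed.

Lemma r_stab g : g \in Gx -> (r g \in 'C[j | 'P]) = (g \in Gxy).
Proof. exact: coset_perm_stab. Qed.

(* The image of Gx is insoluble and transitive, so it contains Alt(T). *)
Lemma Alt_sub_rGx : 'Alt_T \subset r @* Gx.
Proof.
apply: insoluble_transitive_Alt5 card_T (coset_perm_trans Gx Gxy) _.
have := first_isog_loc r r_dom; rewrite (ker_coset_perm sGxy_x) => /isog_sol <-.
exact: nsolQ.
Qed.

Lemma rGxy_stab : r @* Gxy = 'C_(r @* Gx)[j | 'P].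
Proof.
apply/setP => p; apply/morphimP/setIP => [[g _ Gxyg ->] | [/morphimP[g Dg Gg ->]]].
  have Gg := subsetP sGxy_x g Gxyg.
  by split; [apply: mem_morphim; rewrite ?(subsetP r_dom) | rewrite r_stab].
by rewrite r_stab // => Gxyg; exists g.
Qed.

Lemma CA_sub_rGxy : CA \subset r @* Gxy.
Proof. by rewrite rGxy_stab setSI // Alt_sub_rGx. Qed.

Lemma rGxy_sub_CS : r @* Gxy \subset CS.
Proof. by rewrite rGxy_stab setSI ?subsetT. Qed.

Lemma rGxy_primitive : [primitive r @* Gxy, on D | 'P].
Proof.
apply: primitive_supgroup CA_sub_rGxy _ (stab_Alt5_primitive j card_T).
apply/subsetP => p /(subsetP rGxy_sub_CS)/setIP[_]; exact: stab1_normD1.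
Qed.

(* r is injective on B, which meets ker r = A trivially. *)
Lemma B_isog_rB : B \isog r @* B.
Proof.
have sBd : B \subset 'dom r := subset_trans B_sub_Gx r_dom.
apply/isogP; exists (restrm_morphism sBd r); last by rewrite morphim_restrm setIid.
rewrite ker_restrm; apply/subsetP => g /setIP[Bg /mker /eqP].
by rewrite r_eq1 ?(subsetP B_sub_Gx) // => Ag; rewrite -AB1 inE Ag.
Qed.

Lemma r_cent_rB k : k \in Gx -> k \in 'C(B) -> r k \in 'C(r @* B).
Proof.
move=> Gk cBk; apply/centP => _ /morphimP[b _ Bb ->].
have Gb := subsetP B_sub_Gx b Bb.
by rewrite /commute -!rM //; congr r; apply: (centP cBk).
Qed.

(* r(B) is a nontrivial normal subgroup of the primitive group r(Gxy) on D,
   hence transitive there. *)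
Lemma rB_trans : [transitive r @* B, on D | 'P].
Proof.
have nBGxy : B <| Gxy by rewrite /normal B_sub_Gxy Gxy_norm_B.
have ntrB : r @* B :!=: 1.
  by rewrite trivg_card1 -(card_isog B_isog_rB) card_B -trivg_card1.
apply: prim_normal_trans rGxy_primitive _ (morphim_normal r nBGxy) ntrB.
by apply: stab_faithful; apply: subset_trans rGxy_sub_CS (subsetIr _ _).
Qed.

Lemma card_B_cases : #|B| \in [:: 4; 8; 12; 24].
Proof.
rewrite (card_isog B_isog_rB); apply: mult4_dvd24.
  by have := atrans_dvd rB_trans; rewrite card_D1 // card_T.
rewrite -(card_stab_Sym5 j card_T); apply: cardSg.
by apply: subset_trans rGxy_sub_CS; apply: morphimS B_sub_Gxy.
Qed.

(* If CA <= r(B), an element of Gxy centralising B lies in A: its image fixes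
   j and commutes with the 2-transitive group CA on D, so it is trivial. *)
Lemma cent_B_in_A k : CA \subset r @* B -> k \in Gxy -> k \in 'C(B) -> k \in A.
Proof.
move=> sCArB Gxyk cBk; have Gk := subsetP sGxy_x k Gxyk.
have rkj : r k \in 'C[j | 'P] by rewrite r_stab.
rewrite -r_eq1 //; apply/eqP/(perm_stab_id rkj).
apply: (cent_2trans_fix _ (stab_Alt5_2trans j card_T)).
- by rewrite card_D1 // card_T.
- exact: subsetP (centS sCArB) _ (r_cent_rB Gk cBk).
exact: stab1_normD1.
Qed.

(* A 3-element of Gxy centralising B lies in A: its image fixes a point of D,
   as 3 does not divide |D| = 4, and commutes with the transitive r(B). *)
Lemma cent_B_3elt_in_A e : e \in Gxy -> e \in 'C(B) -> 3.-elt e -> e \in A.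
Proof.
move=> Gxye cBe e3; have Gxe := subsetP sGxy_x e Gxye.
have rej : r e \in 'C[j | 'P] by rewrite r_stab.
have p3 : 3.-group <[r e]>.
  have re3 : 3.-elt (r e) by rewrite /r /coset_perm morph_p_elt // (subsetP r_dom).
  by rewrite /pgroup -orderE.
have nDre : [acts <[r e]>, on D | 'P] by rewrite cycle_subG stab1_normD1.
have [u] : exists u, u \in 'Fix_(D | 'P)(<[r e]>).
  apply/set0Pn; rewrite -card_gt0 lt0n; apply/eqP => fix0.
  by have := pgroup_fix_mod p3 nDre; rewrite fix0 card_D1 // card_T.
rewrite afix_cycle => /setIP[Du /afix1P rue].
rewrite -r_eq1 //; apply/eqP/(perm_stab_id rej).
exact: cent_trans_fix rB_trans (r_cent_rB Gxe cBe) Du rue.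
Qed.

(* If |A| is 4 or 8, an element g of order 5 centralises A: the number of
   fixed points of <[g]> on A divides |A| and is congruent to it mod 5. *)
Lemma elt5_cent_A g : #|A| \in [:: 4; 8] -> g \in Gx -> #[g] = 5 -> g \in 'C(A).
Proof.
move=> oA Gg og; have p5 : 5.-group <[g]> by rewrite /pgroup -orderE og pnat_id.
have nAg : [acts <[g]>, on A | 'J] by rewrite astabsJ cycle_subG (subsetP Gx_norm_A).
have fixA : #|A :&: 'C(<[g]>)| = #|A|.
  apply: dvd_2group_mod5 oA (cardSg (subsetIl _ _)) _.
  by rewrite (pgroup_fix_mod p5 nAg) afixJ.
have /eqP <- : A :&: 'C(<[g]>) == A by rewrite eqEcard subsetIl fixA leqnn.
by rewrite -cycle_subG centsC subsetIr.
Qed.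

(* If |A| is 4 or 8, the image of C_Gx(A) contains Alt(T): it is normal in
   the image of Gx and contains an element of order 5, which is even, so it
   meets the simple group Alt(T) nontrivially. *)
Lemma Alt_sub_rcentA : #|A| \in [:: 4; 8] -> 'Alt_T \subset r @* 'C_Gx(A).
Proof.
move=> oA; have d5 : 5 %| #|Gx| by rewrite -(Lagrange sGxy_x) iGx dvdn_mull.
have [g Gg og] := Cauchy (isT : prime 5) d5.
have nCGx : 'C_Gx(A) <| Gx := normalGI Gx_norm_A (cent_normal A).
have nMAlt : 'Alt_T :&: r @* 'C_Gx(A) <| 'Alt_T.
  exact: normalGI Alt_sub_rGx (morphim_normal r nCGx).
have rg_Alt : r g \in 'Alt_T.
  have rg5 : r g ^+ 5 = 1.
    by rewrite /r /coset_perm -morphX ?(subsetP r_dom) // -og expg_order morph1.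
  have rg_square : r g ^+ 3 * r g ^+ 3 = r g by rewrite -expgD (expgS _ 5) rg5 mulg1.
  by rewrite -rg_square Alt_even odd_permM addbb.
have ntrg : r g != 1.
  rewrite r_eq1 //; apply/negP => /order_dvdG; rewrite og.
  by move: oA; rewrite !inE => /orP[]/eqP->.
have rgM : r g \in 'Alt_T :&: r @* 'C_Gx(A).
  rewrite inE rg_Alt mem_morphim ?(subsetP r_dom) //.
  by rewrite inE Gg elt5_cent_A.
have /simpleP[_ /(_ _ nMAlt)[M1 | <-]] : simple 'Alt_T by rewrite simple_Alt5 ?card_T.
  by move: rgM; rewrite M1 inE (negPf ntrg).
exact: subsetIr.
Qed.

(* Otherwise |A| = |B| is 4 or 8, so C_Gx(A) maps onto a
   group containing Alt(T) and a 3-element of CA lifts to a 3-element d of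
   Gxy centralising A; then d^t centralises B and lies in A, forcing d = 1. *)
Lemma three_dvd_B : 3 %| #|B|.
Proof.
apply/negPn/negP => n3B; have oA : #|A| \in [:: 4; 8].
  have := card_B_cases; rewrite card_B !inE.
  by case/or4P => /eqP oA; move: n3B; rewrite card_B oA.
have sCA : CA \subset r @* 'C_Gx(A).
  exact: subset_trans (subsetIl _ _) (Alt_sub_rcentA oA).
have [s CAs os] : {s | s \in CA & #[s] = 3}.
  by apply: Cauchy; rewrite ?card_stab_Alt5 ?card_T.
have /morphimP[c _ cCAc s_c] := subsetP sCA s CAs.
have [Gc cAc] := setIP cCAc.
have Gxyc : c \in Gxy by rewrite -r_stab //; move: CAs; rewrite s_c => /setIP[].
pose d := c.`_3; have cd : d \in <[c]> := cycle_constt 3 c.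
have rd : r d = s.
  rewrite /r /coset_perm morph_constt ?(subsetP r_dom) // s_c.
  by apply: constt_p_elt; rewrite /p_elt -s_c os pnat_id.
have Gxyd : d \in Gxy by apply: subsetP cd; rewrite cycle_subG.
have cAd : d \in 'C(A) by apply: subsetP cd; rewrite cycle_subG.
have Ade : d ^ t \in A.
  apply: cent_B_3elt_in_A; first by rewrite memJ_norm ?t_norm_Gxy.
    by rewrite B_conjA centJ memJ_conjg.
  by rewrite p_eltJ p_elt_constt.
have : #[d ^ t] = 1%N.
  apply: dvd_2group_3nat oA (order_dvdG Ade) _.
  by rewrite orderJ; apply: p_elt_constt.
rewrite orderJ => /eqP; rewrite order_eq1 => /eqP d1.
by move: os; rewrite -rd d1 /r /coset_perm morph1 order1.
Qed.

Lemma rB_CS_or_CA : r @* B = CS \/ r @* B = CA.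
Proof.
have sBCS : r @* B \subset CS.
  by apply: subset_trans rGxy_sub_CS; apply: morphimS B_sub_Gxy.
have := card_B_cases; rewrite (card_isog B_isog_rB) !inE.
case/or4P => /eqP orB; move: three_dvd_B; rewrite (card_isog B_isog_rB) orB // => _.
  by right; apply: stab_Sym5_order12; rewrite ?card_T.
by left; apply/eqP; rewrite eqEcard sBCS orB card_stab_Sym5 ?card_T.
Qed.

Lemma B_isog_S4_A4 : B \isog 'Alt_('I_4) \/ B \isog 'Sym_('I_4).
Proof.
case: rB_CS_or_CA => /group_inj rBE; [right | left]; apply: isog_trans B_isog_rB _;
  rewrite rBE.
  exact: stab_Sym5_isog card_T.
exact: stab_Alt5_isog card_T.
Qed.

(* An element k of the kernel centralises A and
   B; it cannot swap them (A and B intersect trivially), so k lies in Gxy,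
   hence in A, and then k^t lies in B and centralises B, so in A :&: B. *)
Lemma Ge_faithful_AB : [faithful Ge, on A * B | 'J].
Proof.
have sCArB : CA \subset r @* B by case: rB_CS_or_CA => ->; rewrite ?subxx ?setSI ?subsetT.
rewrite /faithful astabJ; apply/subsetP => k /setIP[Gek cABk].
have cAk : k \in 'C(A) := subsetP (centS (mulg_subl A (group1 B))) k cABk.
have cBk : k \in 'C(B) := subsetP (centS (mulg_subr B (group1 A))) k cABk.
have Gxyk : k \in Gxy.
  apply: contraR ntA => nGxyk; have [AkB _] := Ge_swap Gek nGxyk.
  by rewrite -(setIid A) -{2}(normP (subsetP (cent_sub A) k cAk)) AkB AB1.
have Ak := cent_B_in_A sCArB Gxyk cBk.
have Bkt : k ^ t \in B by rewrite B_conjA memJ_conjg.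
have Akt : k ^ t \in A.
  apply: cent_B_in_A sCArB (subsetP B_sub_Gxy _ Bkt) _.
  by rewrite B_conjA centJ memJ_conjg.
have : k ^ t \in A :&: B by rewrite inE Akt Bkt.
by rewrite AB1 !inE conjg_eq1.
Qed.

Lemma A_isog_S4_A4 : A \isog 'Alt_('I_4) \/ A \isog 'Sym_('I_4).
Proof.
have AB : A \isog B by rewrite B_conjA conj_isog.
by case: B_isog_S4_A4 => iB; [left | right]; apply: isog_trans AB iB.
Qed.

End Representation.

End Amalgam.

Theorem lemma5p3 (gT : finGroupType) (Gx Ge Gxy : {group gT}) (t : gT) :
  Gxy \subset Gx -> Gxy \subset Ge -> Gx :&: Ge = Gxy ->
  #|Gx : Gxy| = 5 -> #|Ge : Gxy| = 2 ->
  primitive_amalgam Gx Ge Gxy ->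
  t \in Ge :\: Gxy ->
  let Gx1 := kernel1 Gx Gxy in
  let Gy1 := kernel1 (Gx :^ t) Gxy in
  Gx1 :&: Gy1 = 1 ->
  ~~ solvable (Gx / Gx1) ->
  Gx1 != 1 ->
  (Gx1 \isog 'Alt_('I_4) \/ Gx1 \isog 'Sym_('I_4)) /\
  [acts Ge, on Gx1 * Gy1 | 'J] /\ [faithful Ge, on Gx1 * Gy1 | 'J].
Proof.
move=> sGxy_x sGxy_e _ iGx iGe _ tGe Gx1 Gy1 trivI nsolQ ntA.
split; first exact: A_isog_S4_A4 sGxy_x sGxy_e iGe tGe iGx trivI nsolQ ntA.
split; first exact: Ge_acts_AB sGxy_x sGxy_e iGe tGe.
exact: Ge_faithful_AB sGxy_x sGxy_e iGe tGe iGx trivI nsolQ ntA.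
Qed.
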